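(* Let $(X_k)_{k\ge 1}$ be nonnegative random variables with partial sums $S_0=0$, $S_k=X_1+\dots+X_k$, and let $T$ be a nonnegative DFR random variable, independent of $(X_k)_{k\ge1}$, with survival function $\overline F_T(t)=P(T>t)$. Fix a natural number $n\ge 1$ and assume there exists an $N_n$-distributional version $\{(Z^{\mathbf x}_{n+1},Z^{\mathbf x}_{n+2}):\mathbf x\in N_n\}$ of $(X_{n+1},X_{n+2})$ given $(X_1,\dots,X_n)$ such that, for every DFR survival function $\overline H$ on $[0,\infty)$ with $\overline H(0)=1$ and every $\mathbf x\in N_n$, $$\big(E[\overline H(Z^{\mathbf x}_{n+1})]\big)^2\le E[\overline H(Z^{\mathbf x}_{n+1}+Z^{\mathbf x}_{n+2})].$$ Then $$\big(E[\overline F_T(S_{n+1})]\big)^2\le E[\overline F_T(S_n)]\,E[\overline F_T(S_{n+2})].$$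
   Context: A survival function $\overline G$ (of a nonnegative random variable) is DFR (decreasing failure rate) if for every $z\ge 0$ the map $t\mapsto \overline G(z+t)/\overline G(t)$ is increasing (on $\{t:\overline G(t)>0\}$); a random variable is DFR if its survival function is. Regular conditional distributions: let $F_n$ be the law of $(X_1,\dots,X_n)$ and let $N_n\subseteq\mathbb R_+^n$ be a Borel set with $P((X_1,\dots,X_n)\in N_n)=1$. A family $\{\mu^{\mathbf x}:\mathbf x\in N_n\}$ of probability measures on $\mathbb R_+^m$, such that $\mathbf x\mapsto\mu^{\mathbf x}(B)$ is measurable for every Borel $B\subseteq\mathbb R_+^m$, is an $N_n$ regular conditional distribution of $(X_{n+1},\dots,X_{n+m})$ given $(X_1,\dots,X_n)$ if for all Borel $A\subseteq N_n$ and $B\subseteq\mathbb R_+^m$, $P((X_1,\dots,X_n)\in A,(X_{n+1},\dots,X_{n+m})\in B)=\int_A\mu^{\mathbf x}(B)\,dF_n(\mathbf x)$. An $N_n$-distributional version of $(X_{n+1},\dots,X_{n+m})$ given $(X_1,\dots,X_n)$ is a family of random vectors $\{(Z^{\mathbf x}_{n+1},\dots,Z^{\mathbf x}_{n+m}):\mathbf x\in N_n\}$ (not necessarily on a common probability space) such that $(Z^{\mathbf x}_{n+1},\dots,Z^{\mathbf x}_{n+m})$ has law $\mu^{\mathbf x}$ for each $\mathbf x$, where $\{\mu^{\mathbf x}\}$ is such a regular conditional distribution. *)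

From HB Require Import structures.
From mathcomp Require Import all_boot all_order all_algebra.
From mathcomp Require Import all_classical all_reals all_analysis.
From mathcomp Require Import measurable_realfun.
Set Implicit Arguments. Unset Strict Implicit. Unset Printing Implicit Defensive.
Import Order.TTheory GRing.Theory Num.Theory.
Local Open Scope classical_set_scope.
Local Open Scope ring_scope.

Definition survival (R : realType) (d : measure_display) (Omega : measurableType d)
  (P : probability Omega R) (Y : Omega -> R) (t : R) : R :=
  fine (P [set w | t < Y w]).

Definition is_survival_function (R : realType) (G : R -> R) : Prop :=
  exists nu : probability R R,
    nu `[0, +oo[%classic = 1%E /\ forall t, 0 <= t -> G t = fine (nu `]t, +oo[%classic).

Definition DFR (R : realType) (G : R -> R) : Prop :=
  forall z s t : R, 0 <= z -> 0 <= s -> s <= t -> 0 < G s -> 0 < G t ->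
    G (z + s) / G s <= G (z + t) / G t.

(* (X_1, ..., X_n) as an n-tuple (X k is X_k; X 0 is unused). *)
Definition Xtuple (R : realType) (d : measure_display) (Omega : measurableType d)
  (X : nat -> Omega -> R) (n : nat) (w : Omega) : n.-tuple R :=
  [tuple X i.+1 w | i < n].

Definition psum (R : realType) (d : measure_display) (Omega : measurableType d)
  (X : nat -> Omega -> R) (k : nat) (w : Omega) : R :=
  \sum_(1 <= i < k.+1) X i w.

Definition nonneg_tuple (R : realType) (n : nat) : set (n.-tuple R) :=
  [set x | forall i : 'I_n, 0 <= tnth x i].
Definition nonneg_pair (R : realType) : set (R * R) :=
  [set z | 0 <= z.1 /\ 0 <= z.2].

(* Independence of the random variable T and the sequence (X_k)_{k>=1}:
   T is independent of every finite-dimensional vector (X_1, ..., X_m). *)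
Definition indep_rv_seq (R : realType) (d : measure_display) (Omega : measurableType d)
  (P : probability Omega R) (T : Omega -> R) (X : nat -> Omega -> R) : Prop :=
  forall (m : nat) (B : set R) (A : set (m.-tuple R)),
    measurable B -> measurable A ->
    P (T @^-1` B `&` Xtuple X m @^-1` A) =
    (P (T @^-1` B) * P (Xtuple X m @^-1` A))%E.

(* Condition on (X_1, ..., X_n) = x and put s = x_1 + ... + x_n, G the
   survival function of T.  If G s > 0, the residual function
   t |-> G (s + t) / G s is a DFR survival function equal to 1 at 0, so the
   hypothesis on the conditional law mu^x gives
     (E G (s + Z_1))^2 <= G s * E G (s + Z_1 + Z_2),
   and this also holds trivially when G s = 0.  Integrating against the law of
   (X_1, ..., X_n) then preserves the inequality: pointwise a^2 <= b c with
   a, b, c >= 0 yields (int a)^2 <= (int b) (int c), since 2 a <= l b + c / l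
   for every l > 0. *)

From HB Require Import structures.
From mathcomp Require Import all_boot all_order all_algebra.
From mathcomp Require Import all_classical all_reals all_analysis.
From mathcomp Require Import measurable_realfun.
From mathcomp Require Import ring lra.
Set Implicit Arguments.
Unset Strict Implicit.
Unset Printing Implicit Defensive.
Import Order.TTheory GRing.Theory Num.Theory.
Local Open Scope classical_set_scope.
Local Open Scope ring_scope.

Section amgm.
Context (R : realType).
Implicit Types a b c l : R.

Lemma amgm_of_sqr_le a b c l : 0 <= a -> 0 <= b -> 0 <= c -> 0 < l ->
  a * a <= b * c -> 2 * a <= l * b + l^-1 * c.
Proof.
move=> a0 b0 c0 l0 abc.
have lb0 : 0 <= l * b by rewrite mulr_ge0 // ltW.
have lc0 : 0 <= l^-1 * c by rewrite mulr_ge0 // invr_ge0 ltW.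
have bcE : (l * b) * (l^-1 * c) = b * c by rewrite mulrACA mulfV ?gt_eqF // mul1r.
move: lb0 lc0 bcE; set u := l * b; set v := l^-1 * c => u0 v0 uvE.
rewrite -uvE in abc.
have : 0 <= (u - v) ^+ 2 by exact: sqr_ge0.
nra.
Qed.

Lemma sqr_le_of_amgm a b c : 0 <= a -> 0 <= b -> 0 <= c ->
  (forall l, 0 < l -> 2 * a <= l * b + l^-1 * c) -> a * a <= b * c.
Proof.
move=> a0 b0 c0 amgm.
have [->|a_neq0] := eqVneq a 0; first by rewrite mul0r mulr_ge0.
have a_gt0 : 0 < a by rewrite lt_def a_neq0.
have [b_eq0|b_neq0] := eqVneq b 0.
  have c1_gt0 : 0 < c + 1 by rewrite ltr_wpDl.
  have := amgm ((c + 1) / a) (divr_gt0 c1_gt0 a_gt0).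
  rewrite b_eq0 mulr0 add0r invf_div; set q := a / (c + 1) => amgm_q.
  have qE : q * (c + 1) = a by rewrite divfK ?gt_eqF.
  have : 0 <= q by rewrite divr_ge0 // ltW.
  nra.
have b_gt0 : 0 < b by rewrite lt_def b_neq0.
(* the optimal choice l = a / b *)
have := amgm (a / b) (divr_gt0 a_gt0 b_gt0).
rewrite divfK ?gt_eqF // invf_div; set q := b / a => amgm_q.
have qE : q * a = b by rewrite divfK ?gt_eqF.
nra.
Qed.

End amgm.

Section probability_integral.
Context d (T : measurableType d) (R : realType) (mu : probability T R).
Local Open Scope ereal_scope.

Lemma integral_ge0_le1 (D : set T) (f : T -> R) :
  measurable D -> measurable_fun D f -> (forall x, D x -> 0 <= f x <= 1)%R ->
  0 <= \int[mu]_(x in D) (f x)%:E <= 1.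
Proof.
move=> mD mf f01; have f0 x : D x -> 0 <= (f x)%:E by move=> /f01 /andP[].
apply/andP; split; first exact: integral_ge0.
apply: (@le_trans _ _ (\int[mu]_(x in D) (cst 1 x))).
  apply: ge0_le_integral => //; first exact/measurable_EFinP.
  by move=> x /f01 /andP[_]; rewrite lee_fin.
by rewrite integral_cst // mul1e probability_le1.
Qed.

Lemma fin_num_integral01 (D : set T) (f : T -> R) :
  measurable D -> measurable_fun D f -> (forall x, D x -> 0 <= f x <= 1)%R ->
  \int[mu]_(x in D) (f x)%:E \is a fin_num.
Proof.
move=> mD mf f01; have /andP[i0 i1] := integral_ge0_le1 mD mf f01.
by rewrite ge0_fin_numE // (le_lt_trans i1) // ltey.
Qed.

Lemma fine_integral_ge0_le1 (D : set T) (f : T -> R) :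
  measurable D -> measurable_fun D f -> (forall x, D x -> 0 <= f x <= 1)%R ->
  (0 <= fine (\int[mu]_(x in D) (f x)%:E) <= 1)%R.
Proof.
move=> mD mf f01; have /andP[i0 i1] := integral_ge0_le1 mD mf f01.
by rewrite -!lee_fin fineK ?i0 ?i1 // fin_num_integral01.
Qed.

Lemma integral_sqr_le_mul (D : set T) (a b c : T -> R) : measurable D ->
  measurable_fun D a -> measurable_fun D b -> measurable_fun D c ->
  (forall x, D x -> 0 <= a x <= 1)%R -> (forall x, D x -> 0 <= b x <= 1)%R ->
  (forall x, D x -> 0 <= c x <= 1)%R ->
  (forall x, D x -> a x * a x <= b x * c x)%R ->
  \int[mu]_(x in D) (a x)%:E * \int[mu]_(x in D) (a x)%:E <=
  \int[mu]_(x in D) (b x)%:E * \int[mu]_(x in D) (c x)%:E.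
Proof.
move=> mD ma mb mc a01 b01 c01 abc.
have ge0 (f : T -> R) : (forall x, D x -> 0 <= f x <= 1)%R ->
    forall x, D x -> (0 <= f x)%R by move=> f01 x /f01 /andP[].
have intZ (k : R) (f : T -> R) : (0 <= k)%R -> measurable_fun D f ->
    (forall x, D x -> 0 <= f x)%R ->
    \int[mu]_(x in D) (k * f x)%:E = k%:E * \int[mu]_(x in D) (f x)%:E.
  move=> k0 mf f0; under eq_integral do rewrite EFinM.
  by rewrite ge0_integralZl_EFin //; exact/measurable_EFinP.
have intE (f : T -> R) : measurable_fun D f -> (forall x, D x -> 0 <= f x <= 1)%R ->
    \int[mu]_(x in D) (f x)%:E = (fine (\int[mu]_(x in D) (f x)%:E))%:E.
  by move=> mf f01; rewrite fineK // fin_num_integral01.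
rewrite (intE a) // (intE b) // (intE c) // -!EFinM lee_fin.
have /andP[A0 _] := fine_integral_ge0_le1 mD ma a01.
have /andP[B0 _] := fine_integral_ge0_le1 mD mb b01.
have /andP[C0 _] := fine_integral_ge0_le1 mD mc c01.
apply: sqr_le_of_amgm => // l l0.
have l_ge0 : (0 <= l)%R := ltW l0; have invl_ge0 : (0 <= l^-1)%R by rewrite invr_ge0.
rewrite -lee_fin !EFinD !EFinM -(intE a) // -(intE b) // -(intE c) //.
rewrite -!intZ //; try exact: ge0.
rewrite -ge0_integralD //; first last.
- by apply/measurable_EFinP; apply: measurable_funM.
- by move=> x Dx; rewrite lee_fin mulr_ge0 // ge0.
- by apply/measurable_EFinP; apply: measurable_funM.
- by move=> x Dx; rewrite lee_fin mulr_ge0 // ge0.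
apply: ge0_le_integral => //.
- by move=> x Dx; rewrite lee_fin mulr_ge0 // ?ler0n // ge0.
- by apply/measurable_EFinP; apply: measurable_funM.
- by apply: emeasurable_funD; apply/measurable_EFinP; apply: measurable_funM.
by move=> x Dx; rewrite -EFinD lee_fin amgm_of_sqr_le // ?ge0 // abc.
Qed.

Lemma measureI_full (S B : set T) : measurable S -> measurable B ->
  mu S = 1 -> mu B = mu (B `&` S).
Proof.
move=> mS mB muS; rewrite (measureDI mu mB mS).
have muCS : mu (~` S) = 0 by rewrite probability_setC // muS subee.
rewrite (@subset_measure0 _ _ _ mu _ (~` S)) ?add0e //.
  exact: measurableD.
exact: measurableC.
Qed.

Lemma integral_full_set (S : set T) (f : T -> \bar R) : measurable S ->
  mu S = 1 -> measurable_fun setT f -> (forall x, 0 <= f x) ->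
  \int[mu]_x f x = \int[mu]_(x in S) f x.
Proof.
move=> mS muS mf f0.
have muCS : mu (~` S) = 0 by rewrite probability_setC // muS subee.
rewrite (@ge0_negligible_integral _ _ _ mu setT (~` S)) ?setTD ?setCK //.
exact: measurableC.
Qed.

End probability_integral.

Section mixture.
Local Open Scope ereal_scope.
Context (R : realType) dX (X : measurableType dX) dZ (Z : measurableType dZ)
  (F : probability X R) (N : set X) (mN : measurable N)
  (mu : X -> probability Z R)
  (mmu : forall B, measurable B -> measurable_fun N (fun x => mu x B)).

Definition mu_on (x : X) : {measure set Z -> \bar R} :=
  if x \in N then mu x : {measure set Z -> \bar R} else mzero.

Let measurable_mu_on U : measurable U -> measurable_fun setT (mu_on ^~ U).
Proof.
move=> mU; rewrite (_ : mu_on ^~ U = (fun x => mu x U) \_ N).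
  exact/(measurable_restrictT _ mN)/mmu.
by apply/funext => x; rewrite /mu_on patchE; case: ifP.
Qed.

HB.instance Definition _ := isKernel.Build _ _ _ _ R mu_on measurable_mu_on.

Let mu_on_uub : measure_fam_uub mu_on.
Proof.
exists 2%R => x; rewrite /mu_on; case: ifP => _ /=.
  by rewrite probability_setT lte_fin ltr1n.
by rewrite /mzero lte_fin.
Qed.

HB.instance Definition _ := Kernel_isFinite.Build _ _ _ _ R mu_on mu_on_uub.

Definition cst_kernel (_ : unit) : {measure set X -> \bar R} := F.

Let measurable_cst_kernel U : measurable U -> measurable_fun setT (cst_kernel ^~ U).
Proof. by move=> mU; exact: measurable_cst. Qed.

HB.instance Definition _ := isKernel.Build _ _ _ _ R cst_kernel measurable_cst_kernel.

Let cst_kernel_uub : measure_fam_uub cst_kernel.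
Proof.
exists 2%R => x; rewrite (_ : cst_kernel x setT = 1) ?lte_fin ?ltr1n //.
exact: probability_setT.
Qed.

HB.instance Definition _ := Kernel_isFinite.Build _ _ _ _ R cst_kernel cst_kernel_uub.

(* [graph_mu (_, x)] is the law of [(x, z)] for [z] distributed as [mu x] *)
Definition graph_mu (ux : unit * X) : {measure set (X * Z) -> \bar R}.
Proof.
refine (pushforward (mu_on ux.2) (pair ux.2)).
exact: measurable_fun_pair.
Defined.

Lemma graph_muE ux U : graph_mu ux U = mu_on ux.2 (xsection U ux.2).
Proof. by rewrite xsectionE. Qed.

Let measurable_graph_mu U : measurable U -> measurable_fun setT (graph_mu ^~ U).
Proof.
move=> mU; rewrite (_ : graph_mu ^~ U = (fun x => mu_on x (xsection U x)) \o snd).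
  apply: measurableT_comp => //.
  by apply: measurable_fun_xsection_finite_kernel; rewrite inE.
by apply/funext => ux; rewrite graph_muE.
Qed.

HB.instance Definition _ := isKernel.Build _ _ _ _ R graph_mu measurable_graph_mu.

Let graph_mu_uub : measure_fam_uub graph_mu.
Proof.
exists 2%R => ux; rewrite graph_muE /mu_on; case: ifP => _ /=.
  rewrite (le_lt_trans (probability_le1 _ _)) ?lte_fin ?ltr1n //.
  exact: measurable_xsection.
by rewrite /mzero lte_fin.
Qed.

HB.instance Definition _ := Kernel_isFinite.Build _ _ _ _ R graph_mu graph_mu_uub.

(* the mixture [F(dx) mu x (dz)] of the laws [mu x], [x] ranging over [N] *)
Definition mixture : {measure set (X * Z) -> \bar R} := mkcomp cst_kernel graph_mu tt.

Lemma integral_mixture (f : X * Z -> \bar R) :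
  (forall z, 0 <= f z) -> measurable_fun setT f ->
  \int[mixture]_z f z = \int[F]_(x in N) \int[mu x]_z f (x, z).
Proof.
move=> f0 mf; rewrite integral_kcomp //.
transitivity (\int[F]_x \int[graph_mu (tt, x)]_z f z); first by [].
rewrite [RHS]integral_mkcond; apply: eq_integral => x _.
rewrite patchE ge0_integral_pushforward //= /mu_on; case: ifPn => // _.
exact: integral_measure_zero.
Qed.

Lemma measurable_fun_integral_mu (f : X * Z -> \bar R) :
  (forall z, 0 <= f z) -> measurable_fun setT f ->
  measurable_fun N (fun x => \int[mu x]_z f (x, z)).
Proof.
move=> f0 mf.
apply: eq_measurable_fun (measurable_funS measurableT (subsetT N)
  (measurable_fun_integral_finite_kernel f mu_on f0 mf)) => x xN.
change (\int[mu_on x]_z f (x, z) = \int[mu x]_z f (x, z)).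
by rewrite /mu_on xN.
Qed.

End mixture.

Section disintegration.
Local Open Scope ereal_scope.
Context (R : realType) d (Om : measurableType d) (P : probability Om R)
  dX (X : measurableType dX) dZ (Z : measurableType dZ)
  (F : probability X R) (N : set X) (mN : measurable N)
  (mu : X -> probability Z R)
  (mmu : forall B, measurable B -> measurable_fun N (fun x => mu x B))
  (S : set Z) (mS : measurable S)
  (Y : Om -> X) (V : Om -> Z)
  (mY : measurable_fun setT Y) (mV : measurable_fun setT V)
  (YN : P (Y @^-1` N) = 1) (VS : forall w, S (V w))
  (muS : forall x, N x -> mu x S = 1)
  (joint : forall A B, measurable A -> A `<=` N -> measurable B -> B `<=` S ->
     P (Y @^-1` A `&` V @^-1` B) = \int[F]_(x in A) mu x B).

Let mYV : measurable_fun setT (fun w => (Y w, V w)).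
Proof. exact: measurable_fun_pair. Qed.

Let law : {measure set (X * Z) -> \bar R}.
Proof. by refine (pushforward P (fun w => (Y w, V w))); exact: mYV. Defined.

Let mpreimage d' (Q : measurableType d') (f : Om -> Q) (A : set Q) :
  measurable_fun setT f -> measurable A -> measurable (f @^-1` A).
Proof. by move=> mf mA; rewrite -[X in measurable X]setTI; exact: mf. Qed.

Let law_rectangle A B : measurable A -> measurable B ->
  law (A `*` B) = mixture F mN mmu (A `*` B).
Proof.
move=> mA mB.
have -> : law (A `*` B) = P (Y @^-1` (A `&` N) `&` V @^-1` (B `&` S)).
  rewrite (_ : law _ = P (Y @^-1` A `&` V @^-1` B)) //.
  rewrite (measureI_full (mpreimage mY mN) _ YN); last first.
    exact: measurableI (mpreimage mY mA) (mpreimage mV mB).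
  congr (P _); apply/seteqP; split => w /=.
    by move=> [[Aw Bw] Nw]; split; split.
  by move=> [[Aw Nw] [Bw _]].
rewrite joint //; [|exact: measurableI|exact: measurableI].
transitivity (\int[F]_x graph_mu N mu (tt, x) (A `*` B)); last by [].
rewrite integral_mkcond; apply: eq_integral => x _.
rewrite graph_muE /= patchE; case: ifPn => [/set_mem[xA xN]|xAN].
  rewrite in_xsectionX ?inE // /mu_on ifT ?inE //.
  by rewrite -(measureI_full mS mB (muS xN)).
have [xA|xA] := boolP (x \in A); last by rewrite notin_xsectionX // measure0.
rewrite in_xsectionX // /mu_on ifF //; apply/negbTE; apply: contra xAN.
by rewrite !inE => xN; split => //; move: xA; rewrite inE.
Qed.

Let law_mixture E : measurable E -> law E = mixture F mN mmu E.
Proof.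
move=> mE.
apply: (measure_unique [set A `*` B | A in measurable & B in measurable]
  (fun=> setT)) => //.
- exact: measurable_prod_measurableType.
- move=> _ _ [X1 mX1 [X2 mX2 <-]] [Y1 mY1 [Y2 mY2 <-]].
  exists (X1 `&` Y1); first exact: measurableI.
  by exists (X2 `&` Y2); [exact: measurableI|rewrite setXI].
- by move=> _; exists setT => //; exists setT => //; rewrite setXTT.
- by rewrite bigcup_const.
- by move=> _ [A mA [B mB <-]]; exact: law_rectangle.
- by move=> _; rewrite (_ : law setT = 1) ?ltry //; exact: probability_setT.
Qed.

Lemma disintegration (f : X * Z -> \bar R) :
  (forall z, 0 <= f z) -> measurable_fun setT f ->
  \int[P]_w f (Y w, V w) = \int[F]_(x in N) \int[mu x]_z f (x, z).
Proof.
move=> f0 mf; rewrite -integral_mixture //.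
transitivity (\int[law]_z f z); first by rewrite ge0_integral_pushforward.
by apply: eq_measure_integral => E mE _; exact: law_mixture.
Qed.

Lemma disintegration_sqr_le_mul (f0 f1 f2 : X * Z -> R) :
  measurable_fun setT f0 -> measurable_fun setT f1 -> measurable_fun setT f2 ->
  (forall z, 0 <= f0 z <= 1)%R -> (forall z, 0 <= f1 z <= 1)%R ->
  (forall z, 0 <= f2 z <= 1)%R ->
  (forall x, N x ->
     \int[mu x]_z (f1 (x, z))%:E * \int[mu x]_z (f1 (x, z))%:E <=
     \int[mu x]_z (f0 (x, z))%:E * \int[mu x]_z (f2 (x, z))%:E) ->
  \int[P]_w (f1 (Y w, V w))%:E * \int[P]_w (f1 (Y w, V w))%:E <=
  \int[P]_w (f0 (Y w, V w))%:E * \int[P]_w (f2 (Y w, V w))%:E.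
Proof.
move=> mf0 mf1 mf2 f0_01 f1_01 f2_01 f_sqr_le.
pose cond (f : X * Z -> R) x := fine (\int[mu x]_z (f (x, z))%:E).
have condE (f : X * Z -> R) : measurable_fun setT f -> (forall z, 0 <= f z <= 1)%R ->
    forall x, \int[mu x]_z (f (x, z))%:E = (cond f x)%:E.
  by move=> mf f01 x; rewrite fineK // fin_num_integral01 //; exact: measurable_fun_pair2.
have cond01 (f : X * Z -> R) : measurable_fun setT f -> (forall z, 0 <= f z <= 1)%R ->
    forall x, N x -> (0 <= cond f x <= 1)%R.
  by move=> mf f01 x _; apply: fine_integral_ge0_le1 => //; exact: measurable_fun_pair2.
have mcond (f : X * Z -> R) : measurable_fun setT f -> (forall z, 0 <= f z <= 1)%R ->
    measurable_fun N (cond f).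
  move=> mf f01; apply: (measurableT_comp (fine_measurable measurableT)).
  apply: (measurable_fun_integral_mu mN mmu (f := fun z => (f z)%:E)).
  - by move=> z; rewrite lee_fin; case/andP: (f01 z).
  - exact/measurable_EFinP.
have intE (f : X * Z -> R) : measurable_fun setT f -> (forall z, 0 <= f z <= 1)%R ->
    \int[P]_w (f (Y w, V w))%:E = \int[F]_(x in N) (cond f x)%:E.
  move=> mf f01; rewrite (disintegration (f := fun z => (f z)%:E)).
  - by apply: eq_integral => x _; exact: condE.
  - by move=> z; rewrite lee_fin; case/andP: (f01 z).
  - exact/measurable_EFinP.
rewrite !intE //; apply: integral_sqr_le_mul => //; try exact: mcond.
- exact: cond01.
- exact: cond01.
- exact: cond01.
by move=> x xN; rewrite -lee_fin !EFinM -!condE //; exact: f_sqr_le.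
Qed.

End disintegration.

Definition residual (R : realType) (G : R -> R) (s t : R) : R := G (s + t) / G s.

Lemma DFR_residual (R : realType) (G : R -> R) s :
  0 <= s -> 0 < G s -> DFR G -> DFR (residual G s).
Proof.
move=> s0 Gs0 DFR_G z a b z0 a0 ab Ha Hb.
have Gsa : 0 < G (s + a) by move: (mulr_gt0 Ha Gs0); rewrite divfK ?gt_eqF.
have Gsb : 0 < G (s + b) by move: (mulr_gt0 Hb Gs0); rewrite divfK ?gt_eqF.
rewrite /residual !invf_div !mulrA !divfK ?gt_eqF //.
have sab : s + a <= s + b by rewrite lerD2l.
have := DFR_G z (s + a) (s + b) z0 (addr_ge0 s0 a0) sab Gsa Gsb.
by rewrite [z + (s + a)]addrCA [z + (s + b)]addrCA.
Qed.

Lemma measurable_nonneg_pair (R : realType) : measurable (@nonneg_pair R).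
Proof.
rewrite (_ : @nonneg_pair R = `[0%R, +oo[%classic `*` `[0%R, +oo[%classic).
  exact: measurableX.
by apply/seteqP; split => z /=; rewrite !in_itv /= !andbT.
Qed.

Section survival.
Context (R : realType) d (Om : measurableType d) (P : probability Om R)
  (T : Om -> R) (mT : measurable_fun setT T).
Local Notation G := (survival P T).

Let measurable_gt t : measurable [set w | t < T w].
Proof.
rewrite (_ : [set w | t < T w] = T @^-1` `]t, +oo[); last first.
  by apply/seteqP; split => w /=; rewrite in_itv /= andbT.
by rewrite -[X in measurable X]setTI; exact: mT.
Qed.

Lemma survivalE t : (G t)%:E = P [set w | t < T w].
Proof. by rewrite /survival fineK // fin_num_measure. Qed.

Lemma survival_ge0 t : 0 <= G t.
Proof. by rewrite -lee_fin survivalE. Qed.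

Lemma survival_le1 t : G t <= 1.
Proof. by rewrite -lee_fin survivalE probability_le1. Qed.

Lemma le_survival s t : s <= t -> G t <= G s.
Proof.
move=> st; rewrite -lee_fin !survivalE le_measure ?inE //.
by move=> w /= /(le_lt_trans st).
Qed.

Lemma measurable_survival : measurable_fun setT G.
Proof. by apply: nonincreasing_measurable => // x y /le_survival. Qed.

Let residual_law (s : R) : {measure set R -> \bar R}.
Proof.
refine (pushforward (mrestr P (measurable_gt s)) (fun w => T w - s)).
exact: measurable_funB.
Defined.

Let residual_lawE s U :
  residual_law s U = P ((fun w => T w - s) @^-1` U `&` [set w | s < T w]).
Proof. by []. Qed.

(* [residual G s] is the survival function of the residual life [T - s]
   given [T > s] *)
Lemma residual_survival s : 0 < G s -> is_survival_function (residual G s).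
Proof.
move=> Gs0.
have law_setT : residual_law s setT = (G s)%:E.
  by rewrite residual_lawE preimage_setT setTI survivalE.
pose nu : probability R R := mnormalize (residual_law s) \d_(0:R).
have nuE U : nu U = (residual_law s U * ((G s)^-1)%:E)%E.
  rewrite [LHS]/(mnormalize _ _ U) law_setT /=.
  by case: ifPn => //; rewrite eqe gt_eqF.
exists nu; split.
  rewrite nuE residual_lawE.
  rewrite (_ : _ `&` _ = [set w | s < T w]); last first.
    apply/seteqP; split => w /=; first by case.
    by move=> sT; split => //; rewrite in_itv /= andbT subr_ge0 ltW.
  by rewrite -survivalE -EFinM divff // gt_eqF.
move=> t t0; rewrite nuE residual_lawE.
rewrite (_ : _ `&` _ = [set w | s + t < T w]); last first.
  apply/seteqP; split => w /=; rewrite in_itv /= andbT ltrBrDl; first by case.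
  by move=> stT; split => //; apply: le_lt_trans stT; rewrite lerDl.
by rewrite -survivalE -EFinM.
Qed.

Let measurable_survival_comp (f : R * R -> R) :
  measurable_fun setT f -> measurable_fun setT (fun z => G (f z)).
Proof. by move=> mf; apply: measurableT_comp mf; exact: measurable_survival. Qed.

Let survival01 t : 0 <= G t <= 1.
Proof. by rewrite survival_ge0 survival_le1. Qed.

Lemma integral_survival_shift_eq0 (mu : probability (R * R)%type R) s :
  mu (@nonneg_pair R) = 1%E -> G s = 0 ->
  (\int[mu]_z (G (s + z.1))%:E = 0)%E.
Proof.
move=> mu_nonneg Gs0.
have mG1 : measurable_fun setT (fun z : R * R => (G (s + z.1))%:E).
  apply/measurable_EFinP; apply: measurable_survival_comp.
  by apply: measurable_funD => //; exact: measurable_fst.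
have G1_ge0 (z : R * R) : (0 <= (G (s + z.1))%:E)%E by rewrite lee_fin survival_ge0.
rewrite (integral_full_set (@measurable_nonneg_pair R) mu_nonneg mG1 G1_ge0).
apply: integral0_eq => z [z1_ge0 _]; congr (_%:E); apply/eqP.
by rewrite eq_le survival_ge0 andbT -Gs0 le_survival // lerDl.
Qed.

Lemma survival_sqr_le_mul (mu : probability (R * R)%type R) s :
  mu (@nonneg_pair R) = 1%E -> 0 <= s -> DFR G ->
  (forall H : R -> R, is_survival_function H -> DFR H -> H 0 = 1 ->
     (\int[mu]_z (H z.1)%:E * \int[mu]_z (H z.1)%:E <=
      \int[mu]_z (H (z.1 + z.2))%:E)%E) ->
  (\int[mu]_z (G (s + z.1))%:E * \int[mu]_z (G (s + z.1))%:E <=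
   (G s)%:E * \int[mu]_z (G (s + z.1 + z.2))%:E)%E.
Proof.
move=> mu_nonneg s0 DFR_G DFR_sqr_le.
have [Gs_eq0|Gs_neq0] := eqVneq (G s) 0.
  by rewrite integral_survival_shift_eq0 // mul0e Gs_eq0 mul0e.
have Gs_gt0 : 0 < G s by rewrite lt_def Gs_neq0 survival_ge0.
have m1 : measurable_fun setT (fun z : R * R => s + z.1).
  by apply: measurable_funD => //; exact: measurable_fst.
have m2 : measurable_fun setT (fun z : R * R => s + z.1 + z.2).
  by apply: measurable_funD => //; exact: measurable_snd.
have intE (f : R * R -> R) : measurable_fun setT f ->
    (\int[mu]_z (G (f z))%:E = (fine (\int[mu]_z (G (f z))%:E))%:E)%E.
  by move=> mf; rewrite fineK // fin_num_integral01 //; exact: measurable_survival_comp.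
have intZ (f : R * R -> R) : measurable_fun setT f ->
    (\int[mu]_z (G (f z) / G s)%:E = ((G s)^-1)%:E * \int[mu]_z (G (f z))%:E)%E.
  move=> mf; under eq_integral do rewrite mulrC EFinM.
  rewrite ge0_integralZl //; last by rewrite lee_fin invr_ge0 survival_ge0.
    by apply/measurable_EFinP; exact: measurable_survival_comp.
  by move=> z _; rewrite lee_fin survival_ge0.
have := DFR_sqr_le _ (residual_survival Gs_gt0) (DFR_residual s0 Gs_gt0 DFR_G).
rewrite /residual addr0 divff // => /(_ erefl).
under [X in (_ <= X)%E -> _]eq_integral do rewrite addrA.
rewrite intZ // intZ // (intE _ m1) (intE _ m2) -!EFinM !lee_fin.
set A := fine _; set C := fine _ => h.
have := ler_wpM2l (mulr_ge0 (ltW Gs_gt0) (ltW Gs_gt0)) h.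
(* the residual inequality, multiplied by [G s ^ 2] *)
have -> : G s * G s * ((G s)^-1 * A * ((G s)^-1 * A)) = A * A by field.
by have -> : G s * G s * ((G s)^-1 * C) = G s * C by field.
Qed.

End survival.

Section partial_sums.
Context (R : realType) d (Om : measurableType d) (X : nat -> Om -> R).

Lemma measurable_Xtuple n : (forall k, (1 <= k)%N -> measurable_fun setT (X k)) ->
  measurable_fun setT (Xtuple X n).
Proof.
move=> mX; apply/measurable_fun_tnthP => i.
rewrite (_ : _ \o _ = X i.+1); first exact: mX.
by apply/funext => w; rewrite /= /Xtuple tnth_mktuple.
Qed.

Lemma psum_Xtuple n w : psum X n w = \sum_(i < n) tnth (Xtuple X n w) i.
Proof.
rewrite /psum big_add1 /= big_mkord; apply: eq_bigr => i _.
by rewrite /Xtuple tnth_mktuple.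
Qed.

Lemma psumS n w : psum X n.+1 w = psum X n w + X n.+1 w.
Proof. by rewrite /psum big_nat_recr. Qed.

End partial_sums.

Theorem proposition3p1 (R : realType) (d : measure_display)
  (Omega : measurableType d) (P : probability Omega R)
  (X : nat -> Omega -> R) (T : Omega -> R) (n : nat)
  (Fn : probability (n.-tuple R) R) :
  (forall k, (1 <= k)%N -> measurable_fun setT (X k)) ->
  (forall k w, (1 <= k)%N -> 0 <= X k w) ->
  measurable_fun setT T -> (forall w, 0 <= T w) ->
  DFR (survival P T) ->
  indep_rv_seq P T X ->
  (1 <= n)%N ->
  (forall A, measurable A -> Fn A = P (Xtuple X n @^-1` A)) ->
  (exists (N : set (n.-tuple R)) (mu : n.-tuple R -> probability (R * R)%type R),
     [/\ measurable N /\ N `<=` @nonneg_tuple R n,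
         P (Xtuple X n @^-1` N) = 1%E,
         (forall x, N x -> mu x (@nonneg_pair R) = 1%E) /\
         (forall B, measurable B -> measurable_fun N (fun x : n.-tuple R => (mu x B : \bar R))),
         (forall A B, measurable A -> A `<=` N ->
                      measurable B -> B `<=` @nonneg_pair R ->
            P (Xtuple X n @^-1` A `&`
               (fun w => (X n.+1 w, X n.+2 w)) @^-1` B) =
            (\int[Fn]_(x in A) mu x B)%E) &
         (forall H : R -> R, is_survival_function H -> DFR H -> H 0 = 1 ->
          forall x, N x ->
            ((\int[mu x]_z (H z.1)%:E) * (\int[mu x]_z (H z.1)%:E) <=
             \int[mu x]_z (H (z.1 + z.2))%:E)%E)]) ->
  ((\int[P]_w (survival P T (psum X n.+1 w))%:E) *
   (\int[P]_w (survival P T (psum X n.+1 w))%:E) <=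
   (\int[P]_w (survival P T (psum X n w))%:E) *
   (\int[P]_w (survival P T (psum X n.+2 w))%:E))%E.
Proof.
move=> mX X_ge0 mT _ DFR_T _ _ _ [N [mu [[mN N_ge0] YN [mu_nonneg mmu] joint sqr_le]]].
pose G := survival P T; pose sum (x : n.-tuple R) := \sum_(i < n) tnth x i.
have G01 t : 0 <= G t <= 1 by rewrite (survival_ge0 P mT) (survival_le1 P mT).
have mG (f : n.-tuple R * (R * R) -> R) :
    measurable_fun setT f -> measurable_fun setT (G \o f).
  exact: measurableT_comp (measurable_survival P mT).
have msum : measurable_fun setT (fun xz : n.-tuple R * (R * R) => sum xz.1).
  by apply: measurableT_comp => //; apply: measurable_sum => i; exact: measurable_tnth.
have mz1 : measurable_fun setT (fun xz : n.-tuple R * (R * R) => xz.2.1).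
  exact: measurableT_comp.
rewrite !(funext (psumS X _)) (funext (psum_Xtuple X n)).
apply: (disintegration_sqr_le_mul mN mmu (@measurable_nonneg_pair R)
  (measurable_Xtuple mX) (measurable_fun_pair (mX n.+1 isT) (mX n.+2 isT)) YN _
  mu_nonneg joint (f0 := fun xz => G (sum xz.1))
  (f1 := fun xz => G (sum xz.1 + xz.2.1))
  (f2 := fun xz => G (sum xz.1 + xz.2.1 + xz.2.2))) => //.
- by move=> w; split; exact: X_ge0.
- exact: mG _ msum.
- exact: mG _ (measurable_funD msum mz1).
- exact: mG _ (measurable_funD (measurable_funD msum mz1) (measurableT_comp _ _)).
move=> x xN /=; rewrite integral_cst //.
rewrite [X in (_ * X * _)%E](_ : _ = 1%E) ?mule1; last exact: probability_setT.
apply: survival_sqr_le_mul => //; first exact: mu_nonneg.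
  by apply: sumr_ge0 => i _; exact: N_ge0.
by move=> H H_surv H_DFR H0; exact: sqr_le.
Qed.
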